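(* Let $n$ be a positive integer and $a,b,c,\alpha_0,\alpha_1,\dots,\alpha_{n-1}$ integers with $a\le\alpha_0\le\alpha_1\le\dots\le\alpha_{n-1}$ and $b\le c$. Then the number of families $(P_0,P_1,\dots,P_{n-1})$ of non-intersecting lattice paths, where $P_i$ runs from $(a,b-i)$ to $(\alpha_i,c)$ for $i=0,1,\dots,n-1$, equals $$\prod_{0\le i<j\le n-1}(\alpha_j-\alpha_i)\prod_{i=0}^{n-1}\frac{(\alpha_i+c-a-b)!}{(\alpha_i-a)!\,(c-b+i)!}.$$
   Context: A lattice path is a path in the integer lattice $\mathbb Z^2$ consisting of unit steps $(1,0)$ and $(0,1)$. A family of lattice paths is non-intersecting if no two paths of the family have a common point. *)

From mathcomp Require Import all_boot all_order all_algebra.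
Set Implicit Arguments. Unset Strict Implicit. Unset Printing Implicit Defensive.
Import Order.TTheory GRing.Theory Num.Theory.
Local Open Scope ring_scope.

Definition point := (int * int)%type.

Definition unit_step (p q : point) : bool :=
  (q == (p.1 + 1, p.2)) || (q == (p.1, p.2 + 1)).

(* A lattice path is represented by the (nonempty) sequence of the points it
   visits, consecutive points differing by a unit step.
   [lattice_path u v P] : P is a lattice path from u to v. *)
Definition lattice_path (u v : point) (P : seq point) : Prop :=
  exists t : seq point, P = u :: t /\ path unit_step u t /\ last u t = v.

Definition meet_paths (P Q : seq point) : bool := has (fun x => x \in Q) P.

Definition nonint_family (n : nat) (a b c : int) (alpha : nat -> int)
    (F : n.-tuple (seq point)) : Prop :=
  (forall i : 'I_n, lattice_path (a, b - (i : nat)%:Z) (alpha i, c) (tnth F i)) /\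
  (forall i j : 'I_n, i != j -> ~~ meet_paths (tnth F i) (tnth F j)).

From mathcomp Require Import all_boot all_order all_algebra perm zify ring.
Set Implicit Arguments. Unset Strict Implicit. Unset Printing Implicit Defensive.
Import Order.TTheory GRing.Theory Num.Theory.
Local Open Scope ring_scope.

(* Cut each family along its top row c: path P_i enters row c at some column beta_i and
   then runs horizontally to alpha_i.  The family is non-intersecting iff the truncated
   paths (ending on row c - 1 at the beta_i) are and
   a <= beta_0 <= alpha_0 < beta_1 <= alpha_1 < ... , so the number of families ending on
   row c is the sum, over interlacing beta, of the numbers of families ending on row c - 1.
   When c = b, P_0 is a horizontal segment and the other paths start one row lower.
   The determinant det [C(alpha_j - a + c - b + i, alpha_j - a)]_{i,j} obeys the same
   recursions: by the hockey-stick identity each column is a sum over beta_j <= alpha_j,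
   subtracting consecutive columns restricts beta_j to ]alpha_{j-1}, alpha_j], and
   multilinearity gives the sum over interlacing beta (for c = b, expand along the first
   row).  Finally the determinant factors as a Vandermonde determinant times diagonal
   factors, which is the product formula. *)

(** * Lattice paths *)

Fixpoint hseg (y x : int) (l : nat) : seq point :=
  if l is l'.+1 then (x, y) :: hseg y (x + 1) l' else [:: (x, y)].

Lemma mem_hseg (p : point) y x l :
  (p \in hseg y x l) = (p.2 == y) && (x <= p.1 <= x + l%:Z).
Proof.
case: p => px py /=; elim: l x => [|l IH] x /=; rewrite in_cons ?in_nil ?IH xpair_eqE; lia.
Qed.

Lemma unit_step_le u w : unit_step u w -> u.1 <= w.1 /\ u.2 <= w.2.
Proof. by case: u w => [x y] [x' y'] /orP [] /eqP [-> ->] /=; split; lia. Qed.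

Lemma mem_path_box u t (p : point) : path unit_step u t -> p \in u :: t ->
  u.1 <= p.1 <= (last u t).1 /\ u.2 <= p.2 <= (last u t).2.
Proof.
elim: t u p => [|w t IH] u p /=; first by rewrite mem_seq1 => _ /eqP ->; rewrite !lexx.
case/andP=> /unit_step_le [uw1 uw2] /IH {}IH; have := IH _ (mem_head _ _).
rewrite in_cons => -[/andP[b1 b2] /andP[b3 b4]] /orP [/eqP ->|/IH]; lia.
Qed.

Section LatticePath.

Variables (u v : point) (P : seq point).
Hypothesis uvP : lattice_path u v P.

Lemma lattice_path_box (p : point) : p \in P ->
  u.1 <= p.1 <= v.1 /\ u.2 <= p.2 <= v.2.
Proof. by case: uvP => t [-> [ut <-]]; apply: mem_path_box. Qed.

Lemma lattice_path_last : v \in P.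
Proof. by case: uvP => t [-> [_ <-]]; apply: mem_last. Qed.

End LatticePath.

Lemma lattice_path_hseg y x l : lattice_path (x, y) (x + l%:Z, y) (hseg y x l).
Proof.
elim: l x => [|l IH] x /=; first by exists [::]; rewrite addr0.
have [t [-> [xt lt]]] := IH (x + 1).
exists ((x + 1, y) :: t); split=> //=; split; last by rewrite lt; congr pair; lia.
by rewrite xt andbT /unit_step eqxx.
Qed.

Lemma lattice_path_cat u w w' v P Q : lattice_path u w P -> lattice_path w' v Q ->
  unit_step w w' -> lattice_path u v (P ++ Q).
Proof.
case=> t [-> [ut <-]] [t' [-> [w't' <-]]] ww'.
exists (t ++ w' :: t'); split=> //; split; last by rewrite last_cat.
by rewrite cat_path ut /= ww' w't'.
Qed.

Lemma path_horizontal u t : path unit_step u t -> u.2 = (last u t).2 ->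
  u :: t = hseg u.2 u.1 (absz ((last u t).1 - u.1)).
Proof.
elim: t u => [|w t IH] u /=; first by rewrite subrr; case: u.
case/andP=> uw wt Ey; have [/andP[_ wx] /andP[_ wy]] := mem_path_box wt (mem_head _ _).
have {uw} Ew : w = (u.1 + 1, u.2).
  case/orP: uw => /eqP Ew //; have : w.2 = u.2 + 1 by rewrite Ew.
  lia.
subst w; rewrite IH //; rewrite /= in wx; set L := (last _ t).1 in wx *.
have -> : absz (L - u.1) = (absz (L - (u.1 + 1))%R).+1 by lia.
by rewrite /= -surjective_pairing.
Qed.

Lemma lattice_path_horizontal u v P : lattice_path u v P -> u.2 = v.2 ->
  P = hseg u.2 u.1 (absz (v.1 - u.1)).
Proof. by case=> t [-> [ut <-]]; apply: path_horizontal. Qed.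

Lemma lattice_path_top_row u v P : lattice_path u v P -> u.2 < v.2 ->
  exists P' x, [/\ P = P' ++ hseg v.2 x (absz (v.1 - x)),
                   lattice_path u (x, v.2 - 1) P' & x <= v.1].
Proof.
case=> t [-> [ut <-]]; elim: t u ut => [|w t IH] u /=; first by rewrite ltxx.
case/andP=> uw wt uy; have [/andP[_ wx] /andP[_ wy_le]] := mem_path_box wt (mem_head _ _).
case: (ltP w.2 (last w t).2) => wy.
  have [P' [x [-> [t' [EP' [wt' lt']]] le]]] := IH w wt wy.
  by exists (u :: P'), x; split=> //; exists P'; rewrite EP' /= uw wt'.
have {uw} Ew : w = (u.1, u.2 + 1).
  case/orP: uw => /eqP Ew //; have : w.2 = u.2 by rewrite Ew.
  lia.
have Ey : w.2 = (last w t).2 by lia.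
exists [:: u], u.1; rewrite (path_horizontal wt Ey) -Ey; subst w.
split=> //; by exists [::]; rewrite addrK -surjective_pairing.
Qed.

(** * Cutting paths along the top row *)

Definition extend_path (a c : int) (P : seq point) (b x : nat) : seq point :=
  P ++ hseg c (a + b%:Z) (x - b).

Definition below_row (c : int) (P : seq point) : seq point := [seq p <- P | p.2 < c].

(* Meaningful only for paths that reach row [c]. *)
Definition entry_column (a c : int) (P : seq point) : nat :=
  absz ((head (0%R, 0%R) [seq p <- P | p.2 == c]).1 - a).

Section ExtendPath.

Variables (a c : int) (P : seq point) (b x : nat).
Hypothesis belowP : all (fun p : point => p.2 < c) P.

Lemma below_row_extend : below_row c (extend_path a c P b x) = P.
Proof.
rewrite /below_row filter_cat (all_filterP belowP) -[RHS]cats0; congr (_ ++ _).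
by apply/eqP; rewrite -[_ == _]negbK -has_filter; apply/hasPn => p; rewrite mem_hseg /=; lia.
Qed.

Lemma entry_column_extend : entry_column a c (extend_path a c P b x) = b.
Proof.
rewrite /entry_column filter_cat.
have -> : [seq p <- P | p.2 == c] = [::].
  apply/eqP; rewrite -[_ == _]negbK -has_filter; apply/hasPn => p /(allP belowP) /=; lia.
have -> : [seq p <- hseg c (a + b%:Z) (x - b) | p.2 == c] = hseg c (a + b%:Z) (x - b).
  by apply/all_filterP/allP => p; rewrite mem_hseg => /andP[].
by case: (x - b)%N => /=; lia.
Qed.

End ExtendPath.

Lemma mem_extend_path_entry a c P b x : (a + b%:Z, c) \in extend_path a c P b x.
Proof. by rewrite mem_cat mem_hseg /=; lia. Qed.

Lemma lattice_path_extend u a c P b x : lattice_path u (a + b%:Z, c - 1) P -> (b <= x)%N ->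
  lattice_path u (a + x%:Z, c) (extend_path a c P b x).
Proof.
move=> uP bx; have := lattice_path_hseg c (a + b%:Z) (x - b).
have -> : a + b%:Z + (x - b)%N%:Z = a + x%:Z by lia.
by move/(lattice_path_cat uP); apply; rewrite /unit_step /= subrK eqxx orbT.
Qed.

Lemma lattice_path_split_top a s c x P : s < c -> lattice_path (a, s) (a + x%:Z, c) P ->
  [/\ P = extend_path a c (below_row c P) (entry_column a c P) x,
      lattice_path (a, s) (a + (entry_column a c P)%:Z, c - 1) (below_row c P) &
      (entry_column a c P <= x)%N].
Proof.
move=> sc sP; have [P' [y [-> P'path yx]]] := lattice_path_top_row sP sc.
have [/andP[ay _] _] := lattice_path_box P'path (lattice_path_last P'path).
have belowP' : all (fun p : point => p.2 < c) P'.
  by apply/allP => p /(lattice_path_box P'path) /= [_]; lia.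
have Ey : y = a + (absz (y - a))%:Z by rewrite /= in ay; lia.
have -> : P' ++ hseg c y (absz (a + x%:Z - y)%R) = extend_path a c P' (absz (y - a)) x.
  by rewrite /extend_path -Ey; congr (_ ++ hseg _ _ _); rewrite /= in yx; lia.
rewrite below_row_extend // entry_column_extend // -Ey; split=> //.
by rewrite /= in yx; lia.
Qed.

Fixpoint box (R : seq (nat * nat)) : seq (seq nat) :=
  if R is r :: R' then [seq v :: t | v <- index_iota r.1 r.2.+1, t <- box R'] else [:: [::]].

Lemma mem_box bs R : bs \in box R <-> size bs = size R /\
  forall i, (i < size R)%N -> ((nth (0, 0)%N R i).1 <= nth 0%N bs i <= (nth (0, 0)%N R i).2)%N.
Proof.
elim: R bs => [|r R IH] bs /=.
  by rewrite mem_seq1; split=> [/eqP -> //|[/size0nil ->]].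
split.
  case/allpairsP=> [[v t] [/= vr /IH [st tR] ->]]; split=> /=; first by rewrite st.
  by case=> [|i] /=; [move: vr; rewrite mem_index_iota; lia | apply: tR].
case: bs => [|v t] [//= [st] vtR]; apply/allpairsP; exists (v, t); split=> //=.
  by rewrite mem_index_iota; have /= := vtR 0%N isT; lia.
by apply/IH; split=> // i; apply: (vtR i.+1).
Qed.

Lemma box_uniq R : uniq (box R).
Proof.
elim: R => [|r R IH] //=; apply: allpairs_uniq => //; first exact: iota_uniq.
by move=> [x y] [x' y'] _ _ /= [-> ->].
Qed.

Definition interlacing_bounds (l : nat) (xs : seq nat) : seq (nat * nat) :=
  [seq (if i is i'.+1 then (nth 0%N xs i').+1 else l, nth 0%N xs i) | i <- iota 0 (size xs)].

Lemma size_interlacing_bounds l xs : size (interlacing_bounds l xs) = size xs.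
Proof. by rewrite size_map size_iota. Qed.

Lemma nth_interlacing_bounds l xs i : (i < size xs)%N ->
  nth (0, 0)%N (interlacing_bounds l xs) i =
  (if i is i'.+1 then (nth 0%N xs i').+1 else l, nth 0%N xs i).
Proof. by move=> ?; rewrite (nth_map 0%N) ?size_iota // nth_iota. Qed.

Definition interlaces (l : nat) (xs bs : seq nat) : Prop :=
  [/\ size bs = size xs,
      forall i, (i < size xs)%N -> (nth 0%N bs i <= nth 0%N xs i)%N,
      (0 < size xs)%N -> (l <= nth 0%N bs 0)%N &
      forall i, (i.+1 < size xs)%N -> (nth 0%N xs i < nth 0%N bs i.+1)%N].

Lemma mem_interlacing l xs bs :
  bs \in box (interlacing_bounds l xs) <-> interlaces l xs bs.
Proof.
rewrite mem_box size_interlacing_bounds; split.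
  case=> sbs H; split=> // [i||i] ilt.
  - by have := H i ilt; rewrite nth_interlacing_bounds // => /andP[].
  - by have := H 0%N ilt; rewrite nth_interlacing_bounds // => /andP[].
  - by have := H i.+1 ilt; rewrite nth_interlacing_bounds // => /andP[].
case=> sbs le_bx le_lb lt_xb; split=> // i ilt.
rewrite nth_interlacing_bounds //= le_bx // andbT.
by case: i ilt => [|i] ilt; [apply: le_lb | apply: lt_xb].
Qed.

Lemma sorted_nth_leq (xs : seq nat) i j : sorted leq xs -> (i <= j < size xs)%N ->
  (nth 0%N xs i <= nth 0%N xs j)%N.
Proof.
by move=> xs_sorted /andP[ij jlt]; apply: (sorted_leq_nth leq_trans leqnn) => //; rewrite inE; lia.
Qed.

Lemma interlaces_sorted l xs bs : interlaces l xs bs -> sorted leq bs.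
Proof.
case=> sbs le_bx _ lt_xb; apply/(sortedP 0%N) => i; rewrite sbs => ilt.
by have := le_bx i (ltnW ilt); have := lt_xb i ilt; lia.
Qed.

Lemma interlaces_ge l xs bs i : interlaces l xs bs -> (i < size xs)%N -> (l <= nth 0%N bs i)%N.
Proof.
case=> _ le_bx le_lb lt_xb; elim: i => [|i IH] ilt; first exact: le_lb.
by have := IH (ltnW ilt); have := le_bx i (ltnW ilt); have := lt_xb i ilt; lia.
Qed.

Definition nonint_paths (a s c : int) (xs : seq nat) (F : seq (seq point)) : Prop :=
  [/\ size F = size xs,
      forall i, (i < size xs)%N ->
        lattice_path (a, s - i%:Z) (a + (nth 0%N xs i)%:Z, c) (nth [::] F i) &
      forall i j, (i < size xs)%N -> (j < size xs)%N -> i != j ->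
        ~~ meet_paths (nth [::] F i) (nth [::] F j)].

Definition avoids_row_prefix (a c : int) (l : nat) (F : seq (seq point)) : Prop :=
  forall i (p : point), (i < size F)%N -> p \in nth [::] F i -> p.2 = c -> a + l%:Z <= p.1.

Definition extend_family (a c : int) (G : seq (seq point)) (bs xs : seq nat) :=
  [seq extend_path a c (nth [::] G i) (nth 0%N bs i) (nth 0%N xs i) | i <- iota 0 (size xs)].

Lemma size_extend_family a c G bs xs : size (extend_family a c G bs xs) = size xs.
Proof. by rewrite size_map size_iota. Qed.

Lemma nth_extend_family a c G bs xs i : (i < size xs)%N ->
  nth [::] (extend_family a c G bs xs) i =
  extend_path a c (nth [::] G i) (nth 0%N bs i) (nth 0%N xs i).
Proof. by move=> ilt; rewrite (nth_map 0%N) ?size_iota // nth_iota. Qed.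

Lemma meet_pathsPn (P Q : seq point) :
  reflect (forall p, p \in P -> p \notin Q) (~~ meet_paths P Q).
Proof. exact: hasPn. Qed.

Lemma avoids_row_prefix0 a s c xs F : nonint_paths a s c xs F -> avoids_row_prefix a c 0 F.
Proof.
case=> sF Fpath _ i p; rewrite sF => ilt /(lattice_path_box (Fpath i ilt)) /= [/andP[ap _] _] _.
by rewrite addr0.
Qed.

Lemma nonint_paths_below a s c bs G i : nonint_paths a s (c - 1) bs G -> (i < size bs)%N ->
  all (fun p : point => p.2 < c) (nth [::] G i).
Proof. by case=> _ Gpath _ ilt; apply/allP => p /(lattice_path_box (Gpath i ilt)) /= [_]; lia. Qed.

Lemma extend_familyK a s c G bs xs : nonint_paths a s (c - 1) bs G -> size bs = size xs ->
  map (below_row c) (extend_family a c G bs xs) = G /\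
  map (entry_column a c) (extend_family a c G bs xs) = bs.
Proof.
move=> G_nonint sbs; have [sG _ _] := G_nonint.
split; [apply: (@eq_from_nth _ [::]) | apply: (@eq_from_nth _ 0%N)];
  rewrite ?size_map ?size_iota ?sG ?sbs //.
- move=> i ilt; rewrite (nth_map [::]) ?size_extend_family // nth_extend_family //.
  by rewrite below_row_extend //; apply: nonint_paths_below G_nonint _; rewrite sbs.
- move=> i ilt; rewrite (nth_map [::]) ?size_extend_family // nth_extend_family //.
  by rewrite entry_column_extend //; apply: nonint_paths_below G_nonint _; rewrite sbs.
Qed.

Section ExtendFamily.

Variables (a s c : int) (l : nat) (xs bs : seq nat) (G : seq (seq point)).
Hypotheses (xs_sorted : sorted leq xs) (bs_xs : interlaces l xs bs).
Hypothesis G_nonint : nonint_paths a s (c - 1) bs G.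

Let sbs : size bs = size xs. Proof. by case: bs_xs. Qed.

Let mem_extend k (p : point) : (k < size xs)%N ->
  p \in extend_path a c (nth [::] G k) (nth 0%N bs k) (nth 0%N xs k) ->
  p.2 < c \/ p.2 = c /\ a + (nth 0%N bs k)%:Z <= p.1 <= a + (nth 0%N xs k)%:Z.
Proof.
move=> klt; rewrite mem_cat => /orP[pG|].
  by left; have /(_ k) := nonint_paths_below G_nonint; rewrite sbs => /(_ klt) /allP; apply.
by case: bs_xs => _ le_bx _ _; rewrite mem_hseg => ?; right; have := le_bx k klt; lia.
Qed.

Let lt_x_b i j : (i < j)%N -> (j < size xs)%N -> (nth 0%N xs i < nth 0%N bs j)%N.
Proof.
case: bs_xs => _ _ _ lt_xb; case: j => [//|j] ij jlt.
by have := lt_xb j jlt; have := @sorted_nth_leq xs i j xs_sorted; lia.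
Qed.

Lemma nonint_paths_extend : nonint_paths a s c xs (extend_family a c G bs xs).
Proof.
have [_ Gpath Gdisj] := G_nonint; rewrite sbs in Gpath Gdisj.
split=> [|i ilt|i j ilt jlt ij]; first by rewrite size_extend_family.
  rewrite nth_extend_family //; apply: lattice_path_extend (Gpath i ilt) _.
  by case: bs_xs => _ le_bx _ _; apply: le_bx.
rewrite !nth_extend_family //; apply/meet_pathsPn => p pi; apply/negP => pj.
case: (mem_extend ilt pi) (mem_extend jlt pj) => [pGi|[pci pi_row]] [pGj|[pcj pj_row]]; try lia.
- move: pi pj; rewrite !mem_cat => /orP[pi|]; last by rewrite mem_hseg; lia.
  case/orP=> [pj|]; last by rewrite mem_hseg; lia.
  by move/meet_pathsPn: (Gdisj i j ilt jlt ij) => /(_ p pi); rewrite pj.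
- by case: (ltngtP i j) ij => // [/lt_x_b/(_ jlt)|/lt_x_b/(_ ilt)]; lia.
Qed.

Lemma avoids_row_prefix_extend : avoids_row_prefix a c l (extend_family a c G bs xs).
Proof.
move=> i p; rewrite size_extend_family => ilt; rewrite nth_extend_family //.
case/(mem_extend ilt) => [|[_ pi_row] _]; first lia.
by have := interlaces_ge bs_xs ilt; lia.
Qed.

End ExtendFamily.

Section SplitFamily.

Variables (a s c : int) (xs : seq nat) (F : seq (seq point)).
Hypotheses (sc : s < c) (F_nonint : nonint_paths a s c xs F).

Let sF : size F = size xs. Proof. by case: F_nonint. Qed.

Let split_nth i : (i < size xs)%N ->
  [/\ nth [::] F i = extend_path a c (below_row c (nth [::] F i))
                       (entry_column a c (nth [::] F i)) (nth 0%N xs i),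
      lattice_path (a, s - i%:Z) (a + (entry_column a c (nth [::] F i))%:Z, c - 1)
        (below_row c (nth [::] F i)) &
      (entry_column a c (nth [::] F i) <= nth 0%N xs i)%N].
Proof. by case: F_nonint => _ Fpath _ ilt; apply: lattice_path_split_top (Fpath i ilt); lia. Qed.

Let nth_entry i : (i < size xs)%N ->
  nth 0%N (map (entry_column a c) F) i = entry_column a c (nth [::] F i).
Proof. by move=> ilt; rewrite (nth_map [::]) ?sF. Qed.

Let nth_below i : (i < size xs)%N ->
  nth [::] (map (below_row c) F) i = below_row c (nth [::] F i).
Proof. by move=> ilt; rewrite (nth_map [::]) ?sF. Qed.

Lemma extend_family_split :
  F = extend_family a c (map (below_row c) F) (map (entry_column a c) F) xs.
Proof.
apply: (@eq_from_nth _ [::]); rewrite ?size_extend_family // => i; rewrite sF => ilt.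
by rewrite nth_extend_family // nth_below // nth_entry //; case: (split_nth ilt).
Qed.

Lemma nonint_paths_below_row :
  nonint_paths a s (c - 1) (map (entry_column a c) F) (map (below_row c) F).
Proof.
case: F_nonint => _ _ Fdisj; split=> [|i|i j]; rewrite ?size_map ?sF // => ilt.
  by rewrite nth_below // nth_entry //; case: (split_nth ilt).
move=> jlt ij; rewrite !nth_below //; apply/meet_pathsPn => p.
rewrite !mem_filter => /andP[_ pi]; apply/negP => /andP[_ pj].
by move/meet_pathsPn: (Fdisj i j ilt jlt ij) => /(_ p pi); rewrite pj.
Qed.

(* A path entering the top row at or left of the end of the previous path would meet it. *)
Lemma interlaces_entry_columns l : sorted leq xs -> avoids_row_prefix a c l F ->
  interlaces l xs (map (entry_column a c) F).
Proof.
case: F_nonint => _ Fpath Fdisj xs_sorted Favoids.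
split=> [|i ilt|xs0|i ilt]; first by rewrite size_map.
- by rewrite nth_entry //; case: (split_nth ilt).
- rewrite nth_entry //; case: (split_nth xs0) => F0 _ _.
  have := Favoids 0%N (a + (entry_column a c (nth [::] F 0))%:Z, c); rewrite sF.
  by rewrite [X in _ \in X]F0 mem_extend_path_entry => /(_ xs0 isT erefl) /=; lia.
- rewrite nth_entry //; apply: contraT; rewrite -leqNgt => le_bx.
  have iltS : (i < size xs)%N by lia.
  have end_i : (a + (nth 0%N xs i)%:Z, c) \in nth [::] F i := lattice_path_last (Fpath i iltS).
  have end_iS : (a + (nth 0%N xs i)%:Z, c) \in nth [::] F i.+1.
    case: (split_nth ilt) => -> _ le_x; rewrite mem_cat mem_hseg /=.
    by have := @sorted_nth_leq xs i i.+1 xs_sorted; lia.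
  have := Fdisj i i.+1 iltS ilt (negbT (ltn_eqF (ltnSn i))).
  by move/meet_pathsPn => /(_ _ end_i); rewrite end_iS.
Qed.

End SplitFamily.

Lemma nonint_paths_cons a b x xs G :
  nonint_paths a (b - 1) b xs G -> avoids_row_prefix a b x.+1 G ->
  nonint_paths a b b (x :: xs) (hseg b a x :: G).
Proof.
case=> sG Gpath Gdisj Gavoids; have shift k : b - k.+1%:Z = b - 1 - k%:Z by lia.
split=> [|[|i] ilt|[|i] [|j] //= ilt jlt ij]; rewrite /= ?sG //.
- by have := lattice_path_hseg b a x; rewrite subr0.
- by rewrite shift; apply: Gpath.
- apply/meet_pathsPn => p; rewrite mem_hseg => /andP[/eqP pb px]; apply/negP => pj.
  by have := Gavoids j p; rewrite sG => /(_ jlt pj pb); lia.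
- apply/meet_pathsPn => p pi; rewrite mem_hseg; apply/andP => -[/eqP pb px].
  by have := Gavoids i p; rewrite sG => /(_ ilt pi pb); lia.
- exact: Gdisj.
Qed.

Lemma nonint_paths_consP a b x xs F : nonint_paths a b b (x :: xs) F ->
  exists2 G, nonint_paths a (b - 1) b xs G /\ avoids_row_prefix a b x.+1 G & F = hseg b a x :: G.
Proof.
case: F => [|P G] [//= [sG] Fpath Fdisj]; have shift k : b - k.+1%:Z = b - 1 - k%:Z by lia.
have Ppath : lattice_path (a, b) (a + x%:Z, b) P by have := Fpath 0%N isT; rewrite subr0.
have EP := lattice_path_horizontal Ppath erefl.
have {}EP : P = hseg b a x by rewrite EP /=; congr hseg; lia.
exists G; last by rewrite EP.
split.
  split=> // [i ilt|i j ilt jlt ij]; last exact: (Fdisj i.+1 j.+1).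
  by rewrite -shift; apply: (Fpath i.+1).
move=> i p; rewrite sG => ilt pi pb; have /= := Fpath i.+1 ilt.
move/lattice_path_box/(_ p pi) => /= [/andP[ap _] _]; rewrite leNgt; apply/negP => px.
have : p \in P by rewrite EP mem_hseg pb eqxx /=; lia.
by move/meet_pathsPn: (Fdisj 0%N i.+1 isT ilt isT) => /[apply]; rewrite pi.
Qed.

(** * Counting *)

Definition enumerates (T : eqType) (P : T -> Prop) (S : seq T) : Prop :=
  uniq S /\ forall x, x \in S <-> P x.

Lemma enumerates_map (T U : eqType) (f : T -> U) (P : T -> Prop) (Q : U -> Prop) S :
  injective f -> (forall u, Q u <-> exists2 x, P x & u = f x) ->
  enumerates P S -> enumerates Q (map f S).
Proof.
move=> f_inj QE [S_uniq memS]; split=> [|u]; first by rewrite map_inj_uniq.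
rewrite QE; split=> [/mapP[x /memS Px ->]|[x /memS Sx ->]]; first by exists x.
exact: map_f.
Qed.

Lemma enumerates_ext (T : eqType) (P Q : T -> Prop) S :
  (forall x, P x <-> Q x) -> enumerates P S -> enumerates Q S.
Proof. by move=> PQ [S_uniq memS]; split=> // x; rewrite memS. Qed.

Lemma enumerates_tuples (T : eqType) n (P : seq T -> Prop) S :
  (forall s, P s -> size s = n) -> enumerates P S ->
  enumerates (fun t : n.-tuple T => P t) (pmap insub S) /\
  size (pmap insub S : seq (n.-tuple T)) = size S.
Proof.
move=> sizeP [S_uniq memS]; split; first by split=> [|t]; rewrite ?pmap_sub_uniq ?mem_pmap_sub.
rewrite size_pmap_sub -[RHS]count_predT; apply: eq_in_count => s /memS /sizeP ->.
by rewrite eqxx.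
Qed.

Lemma enumerates_sum (R : pzSemiRingType) (I T U : eqType) (B : seq I)
    (P : I -> T -> Prop) (f : I -> T -> U) (Q : U -> Prop) (N : I -> R) :
  uniq B ->
  (forall i j x y, i \in B -> j \in B -> P i x -> P j y -> f i x = f j y -> i = j /\ x = y) ->
  (forall u, Q u <-> exists i x, [/\ i \in B, P i x & u = f i x]) ->
  (forall i, i \in B -> exists2 S, enumerates (P i) S & (size S)%:R = N i) ->
  exists2 S, enumerates Q S & (size S)%:R = \sum_(i <- B) N i.
Proof.
elim: B Q => [|i B IH] Q /=.
  move=> _ _ QE _; exists [::]; rewrite ?big_nil //; split=> // u; rewrite QE.
  by split=> // -[? [? []]].
case/andP=> iB B_uniq f_inj QE countP.
have [Si [Si_uniq memSi] sizeSi] := countP i (mem_head _ _).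
have [|||S [S_uniq memS] sizeS] := IH (fun u => exists j x, [/\ j \in B, P j x & u = f j x]) B_uniq.
- by move=> j k x y jB kB; apply: f_inj; rewrite inE ?jB ?kB orbT.
- by [].
- by move=> j jB; apply: countP; rewrite inE jB orbT.
exists (map (f i) Si ++ S); last by rewrite big_cons size_cat size_map natrD sizeSi sizeS.
split=> [|u].
  rewrite cat_uniq S_uniq andbT map_inj_in_uniq ?Si_uniq /=; last first.
    by move=> x y /memSi Px /memSi Py /(f_inj _ _ _ _ (mem_head _ _) (mem_head _ _) Px Py) [].
  apply/hasPn => u /memS [j [x [jB Pjx ->]]]; apply/mapP => -[y /memSi Piy /esym fji].
  have jiB : j \in i :: B by rewrite inE jB orbT.
  by have [eij _] := f_inj i j y x (mem_head _ _) jiB Piy Pjx fji; rewrite eij jB in iB.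
rewrite QE mem_cat; split.
  case/orP=> [/mapP[x /memSi Pix ->]|/memS[j [x [jB Pjx ->]]]].
    by exists i, x; rewrite mem_head.
  by exists j, x; rewrite inE jB orbT.
case=> j [x [/predU1P[-> Pix ->|jB Pjx ->]]]; apply/orP; last by right; apply/memS; exists j, x.
by left; apply: map_f; apply/memSi.
Qed.

Lemma count_nonint_top_row (R : pzSemiRingType) a s c l xs (N : seq nat -> R) :
  s < c -> sorted leq xs ->
  (forall bs, interlaces l xs bs ->
     exists2 S, enumerates (nonint_paths a s (c - 1) bs) S & (size S)%:R = N bs) ->
  exists2 S, enumerates (fun F => nonint_paths a s c xs F /\ avoids_row_prefix a c l F) S &
    (size S)%:R = \sum_(bs <- box (interlacing_bounds l xs)) N bs.
Proof.
move=> sc xs_sorted countP.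
apply: (enumerates_sum (P := nonint_paths a s (c - 1))
  (f := fun bs G => extend_family a c G bs xs)) (box_uniq _) _ _ _.
- move=> bs bs' G G' /mem_interlacing[sbs _ _ _] /mem_interlacing[sbs' _ _ _] G_nonint G'_nonint E.
  have [EG Ebs] := extend_familyK G_nonint sbs; have [EG' Ebs'] := extend_familyK G'_nonint sbs'.
  by split; [rewrite -Ebs -Ebs' E | rewrite -EG -EG' E].
- move=> F; split=> [[F_nonint Favoids]|[bs [G [/mem_interlacing bs_xs G_nonint ->]]]].
    exists (map (entry_column a c) F), (map (below_row c) F); split.
    + by apply/mem_interlacing; apply: (interlaces_entry_columns sc F_nonint).
    + exact: nonint_paths_below_row sc F_nonint.
    + exact: extend_family_split sc F_nonint.
  split; first exact: nonint_paths_extend xs_sorted bs_xs G_nonint.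
  exact: avoids_row_prefix_extend bs_xs G_nonint.
- by move=> bs /mem_interlacing; apply: countP.
Qed.

(** * The determinant *)

Section BoxDeterminants.

Variable R : comPzRingType.

Lemma sum_box_prod (B : seq (nat * nat)) n (phi : nat -> nat -> R) : size B = n ->
  \sum_(bs <- box B) \prod_(j < n) phi j (nth 0%N bs j) =
  \prod_(j < n) \sum_((nth (0, 0)%N B j).1 <= v < (nth (0, 0)%N B j).2.+1) phi j v.
Proof.
elim: B n phi => [|r B IH] [|n] phi //= => [_|[sB]]; first by rewrite big_seq1 !big_ord0.
rewrite big_allpairs_dep /= big_ord_recl /= mulr_suml; apply: eq_bigr => v _.
rewrite -(IH n (fun j => phi j.+1)) // mulr_sumr; apply: eq_bigr => t _.
by rewrite big_ord_recl /=; congr (_ * _); apply: eq_bigr => j _; rewrite lift0.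
Qed.

Lemma det_sum_box (B : seq (nat * nat)) n (g : nat -> nat -> R) : size B = n ->
  \sum_(bs <- box B) \det (\matrix_(i < n, j < n) g i (nth 0%N bs j)) =
  \det (\matrix_(i < n, j < n)
          \sum_((nth (0, 0)%N B j).1 <= v < (nth (0, 0)%N B j).2.+1) g i v).
Proof.
move=> sB; have detT (A : 'M[R]_n) : \det A = \sum_(s : 'S_n) (-1) ^+ s * \prod_i A (s i) i.
  by rewrite -det_tr; apply: eq_bigr => s _; congr (_ * _); apply: eq_bigr => i _; rewrite mxE.
under eq_bigr => bs _ do rewrite detT.
rewrite detT exchange_big /=; apply: eq_bigr => s _; rewrite -mulr_sumr; congr (_ * _).
pose phi (j v : nat) := if insub j is Some k then g (s k) v else 0.
have phiE (i : 'I_n) v : phi i v = g (s i) v by rewrite /phi valK.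
transitivity (\sum_(bs <- box B) \prod_(i < n) phi i (nth 0%N bs i)).
  by apply: eq_bigr => bs _; apply: eq_bigr => i _; rewrite mxE phiE.
by rewrite sum_box_prod //; apply: eq_bigr => i _; rewrite mxE; apply: eq_bigr => v _; rewrite phiE.
Qed.

Lemma sum_prefix_interlacing (xs : seq nat) (G : nat -> R) j : sorted leq xs -> (j < size xs)%N ->
  \sum_(0 <= v < (nth 0%N xs j).+1) G v =
  \sum_(0 <= k < j.+1) \sum_((nth (0, 0)%N (interlacing_bounds 0 xs) k).1 <= v <
                               (nth (0, 0)%N (interlacing_bounds 0 xs) k).2.+1) G v.
Proof.
move=> xs_sorted; elim: j => [|j IH] jlt; first by rewrite big_nat1 nth_interlacing_bounds.
rewrite [RHS]big_nat_recr //= -IH ?nth_interlacing_bounds //=; last by lia.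
by rewrite -big_cat_nat // ltnS sorted_nth_leq // leqnSn.
Qed.

(* Subtract from each column the previous one: a unitriangular column operation. *)
Lemma det_prefix_sums n xs (g : nat -> nat -> R) : size xs = n -> sorted leq xs ->
  \det (\matrix_(i < n, j < n) \sum_(0 <= v < (nth 0%N xs j).+1) g i v) =
  \det (\matrix_(i < n, j < n)
          \sum_((nth (0, 0)%N (interlacing_bounds 0 xs) j).1 <= v <
                (nth (0, 0)%N (interlacing_bounds 0 xs) j).2.+1) g i v).
Proof.
move=> sxs xs_sorted.
set B := (X in _ = \det X).
pose U := \matrix_(k < n, j < n) ((k <= j)%N%:R : R).
have -> : \matrix_(i < n, j < n) \sum_(0 <= v < (nth 0%N xs j).+1) g i v = B *m U.
  apply/matrixP => i j; rewrite !mxE sum_prefix_interlacing ?sxs //.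
  set F := (X in \sum_(0 <= k < j.+1) X k).
  rewrite big_mkord (big_ord_widen n F (ltn_ord j)) big_mkcond.
  apply: eq_bigr => k _; rewrite [U _ _]mxE [B _ _]mxE ltnS.
  by case: leqP; rewrite ?mulr1 ?mulr0.
rewrite det_mulmx -[\det U]det_tr (@det_trig _ _ U^T); last first.
  by apply/forallP => i; apply/forallP => j; apply/implyP => ij; rewrite !mxE leqNgt ij.
by rewrite big1 ?mulr1 // => i _; rewrite !mxE leqnn.
Qed.

End BoxDeterminants.

Lemma sum_bin_diag m x : \sum_(0 <= v < x.+1) 'C(v + m, v) = 'C(x + m.+1, x).
Proof.
elim: x => [|x IH]; first by rewrite big_nat1 !bin0.
rewrite big_nat_recr //= IH.
have -> : (x.+1 + m.+1 = (x + m.+1).+1)%N by rewrite addSn.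
by rewrite binS addSnnS; apply: addnC.
Qed.

Section LGVDeterminant.

Variable R : comPzRingType.

(* Entry (i, j) counts the lattice paths from (a, b - i) to (a + x_j, b + h). *)
Definition lgv_det (n h : nat) (xs : seq nat) : R :=
  \det (\matrix_(i < n, j < n) ('C(nth 0%N xs j + (h + i), nth 0%N xs j))%:R).

Lemma lgv_detS n h xs : size xs = n -> sorted leq xs ->
  lgv_det n h.+1 xs = \sum_(bs <- box (interlacing_bounds 0 xs)) lgv_det n h bs.
Proof.
move=> sxs xs_sorted; rewrite /lgv_det (det_sum_box (fun i v => ('C(v + (h + i), v))%:R));
  last by rewrite size_interlacing_bounds.
rewrite -(@det_prefix_sums _ _ xs (fun i v => ('C(v + (h + i), v))%:R)) //.
congr (\det _); apply/matrixP => i j.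
by rewrite !mxE -natr_sum sum_bin_diag addSn.
Qed.

Lemma lgv_det0 n x xs : size xs = n -> sorted leq (x :: xs) ->
  lgv_det n.+1 0 (x :: xs) = \sum_(bs <- box (interlacing_bounds x.+1 xs)) lgv_det n 0 bs.
Proof.
move=> sxs xs_sorted; rewrite /lgv_det (det_sum_box (fun i v => ('C(v + (0 + i), v))%:R));
  last by rewrite size_interlacing_bounds.
(* Writing the first row as sums of [v == 0] makes it (1, 0, ..., 0) after [det_prefix_sums]. *)
pose G (i v : nat) : R := if i is i'.+1 then ('C(v + i', v))%:R else (v == 0%N)%:R.
have -> : \matrix_(i < n.+1, j < n.+1) ('C(nth 0%N (x :: xs) j + (0 + i), nth 0%N (x :: xs) j))%:R
    = \matrix_(i < n.+1, j < n.+1) \sum_(0 <= v < (nth 0%N (x :: xs) j).+1) G i v.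
  apply/matrixP => -[[|i] ilt] j; rewrite !mxE /G /=.
    by rewrite big_ltn // big_nat big1 ?addr0 ?addn0 ?binn // => -[].
  by rewrite -natr_sum sum_bin_diag addnS.
rewrite det_prefix_sums //= ?sxs // (expand_det_row _ ord0) big_ord_recl big1 ?addr0.
  rewrite !mxE nth_interlacing_bounds //= big_ltn // big_nat big1 ?addr0 /=; last by case.
  rewrite mul1r /cofactor expr0 mul1r; congr (\det _); apply/matrixP => i j; rewrite !mxE lift0.
  by rewrite !nth_interlacing_bounds /= ?sxs ?ltnS //; case: (nat_of_ord j).
move=> j _; rewrite !mxE lift0 nth_interlacing_bounds /= ?sxs ?ltnS //.
by rewrite big_nat big1 ?mul0r // => -[].
Qed.

End LGVDeterminant.


Lemma count_nonint_paths (R : comPzRingType) n h a b c xs :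
  c = b + h%:Z -> size xs = n -> sorted leq xs ->
  exists2 S, enumerates (nonint_paths a b c xs) S & (size S)%:R = lgv_det R n h xs.
Proof.
elim: n h a b c xs => [|n IHn] h a b c xs.
  move=> _ /size0nil -> _; exists [:: [::]]; last by rewrite /lgv_det det_mx00.
  split=> // F; rewrite mem_seq1; split=> [/eqP -> //|[/size0nil -> //]].
elim: h a b c xs => [|h IHh] a b c xs -> sxs xs_sorted.
  case: xs sxs xs_sorted => [//|x xs] [sxs] /= xs_path; rewrite addr0.
  have below : b - 1 < b by rewrite ltrBlDr ltrDl.
  have [|S SE sizeS] := count_nonint_top_row (a := a) (l := x.+1) (N := lgv_det R n 0) below
    (path_sorted xs_path).
    move=> bs bs_xs; have [sbs _ _ _] := bs_xs.
    by apply: IHn; rewrite ?addr0 ?sbs // (interlaces_sorted bs_xs).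
  exists (map (cons (hseg b a x)) S); last by rewrite size_map sizeS lgv_det0.
  apply: enumerates_map SE; first by move=> G G' [].
  move=> F; split=> [/nonint_paths_consP|[G [G_nonint Gavoids] ->]]; last exact: nonint_paths_cons.
  by case=> G Gpaths ->; exists G.
have below : b < b + h.+1%:Z by lia.
have [|S SE sizeS] :=
  count_nonint_top_row (a := a) (l := 0) (N := lgv_det R n.+1 h) below xs_sorted.
  move=> bs bs_xs; have [sbs _ _ _] := bs_xs.
  by apply: IHh; rewrite ?sbs ?(interlaces_sorted bs_xs) //; lia.
exists S; last by rewrite sizeS lgv_detS.
apply: enumerates_ext SE => F; split=> [[] //|F_nonint]; split=> //.
exact: avoids_row_prefix0 F_nonint.
Qed.

Lemma fact_addn_prod n i : (n + i)`! = (n`! * \prod_(k < i) (n + k.+1))%N.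
Proof.
by elim: i => [|i IH]; rewrite ?big_ord0 ?addn0 ?muln1 // big_ord_recr addnS factS IH /=; ring.
Qed.

Section LGVDeterminantClosedForm.

Variable R : numFieldType.

Lemma natr_fact_neq0 n : (n`!)%:R != 0 :> R.
Proof. by rewrite pnatr_eq0 -lt0n fact_gt0. Qed.

Lemma natr_bin_rising x m i : ('C(x + (m + i), x))%:R =
  ((x + m)`!)%:R / (x`!)%:R / ((m + i)`!)%:R * \prod_(k < i) ((x + m + k.+1)%:R : R).
Proof.
have E : ('C(x + (m + i), x) * (x`! * (m + i)`!))%N = ((x + m)`! * \prod_(k < i) (x + m + k.+1))%N.
  by rewrite -{2}(addKn x (m + i)%N) bin_fact ?leq_addr // addnA fact_addn_prod.
move/(congr1 (fun k => k%:R : R)): E; rewrite !natrM -natr_prod => E.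
apply: (mulIf (mulf_neq0 (natr_fact_neq0 x) (natr_fact_neq0 (m + i)))); rewrite E.
by field; rewrite !natr_fact_neq0.
Qed.

(* Its values at the x_j give the products in [natr_bin_rising]; its coefficient matrix is
   unitriangular, which reduces [lgv_det] to a Vandermonde determinant. *)
Definition rising_poly (h i : nat) : {poly R} :=
  \prod_(k <- iota 0 i) ('X - (- (h + k.+1)%:R)%:P).

Lemma size_rising_poly h i : size (rising_poly h i) = i.+1.
Proof. by rewrite size_prod_XsubC size_iota. Qed.

Lemma rising_poly_monic h i : rising_poly h i \is monic.
Proof. exact: monic_prod_XsubC. Qed.

Lemma horner_rising_poly h i (x : R) :
  (rising_poly h i).[x] = \prod_(k < i) (x + (h + k.+1)%:R).
Proof.
rewrite horner_prod -(subn0 i) -/(index_iota 0 i) big_mkord subn0.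
by apply: eq_bigr => k _; rewrite hornerXsubC opprK.
Qed.

Lemma lgv_det_closed n h xs : lgv_det R n h xs =
  (\prod_(i < n) \prod_(j < n | (i < j)%N) ((nth 0%N xs j)%:R - (nth 0%N xs i)%:R)) *
  \prod_(i < n) (((nth 0%N xs i + h)`!)%:R / (((nth 0%N xs i)`!)%:R * ((h + i)`!)%:R)).
Proof.
pose x (j : 'I_n) := nth 0%N xs j.
pose r := \row_(i < n) ((h + i)`!)%:R^-1 : 'rV[R]_n.
pose c := \row_(j < n) (((x j + h)`!)%:R / ((x j)`!)%:R) : 'rV[R]_n.
pose L := \matrix_(i < n, k < n) (rising_poly h i)`_k.
pose a := \row_(j < n) ((x j)%:R : R).
have -> : lgv_det R n h xs = \det (diag_mx r *m (L *m Vandermonde n a) *m diag_mx c).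
  rewrite /lgv_det mul_mx_diag mul_diag_mx; congr (\det _); apply/matrixP => i j.
  rewrite !mxE natr_bin_rising.
  have -> : \sum_(k < n) L i k * Vandermonde n a k j = (rising_poly h i).[(x j)%:R].
    rewrite (@horner_coef_wide _ n) ?size_rising_poly //.
    by apply: eq_bigr => k _; rewrite !mxE.
  rewrite horner_rising_poly; under eq_bigr do rewrite -addnA natrD.
  by rewrite /x; field; rewrite !natr_fact_neq0.
rewrite !det_mulmx !det_diag det_Vandermonde (@det_trig _ _ L); last first.
  apply/forallP => i; apply/forallP => k; apply/implyP => ik; rewrite mxE.
  by rewrite nth_default // size_rising_poly.
rewrite [\prod_(i < n) L i i]big1 ?mul1r; last first.
  by move=> i _; rewrite mxE -(monicP (rising_poly_monic h i)) lead_coefE size_rising_poly.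
rewrite mulrAC mulrC; congr (_ * _).
  by apply: eq_bigr => i _; apply: eq_bigr => j _; rewrite !mxE.
rewrite -big_split /=; apply: eq_bigr => i _; rewrite !mxE.
by field; rewrite !natr_fact_neq0.
Qed.

End LGVDeterminantClosedForm.

Lemma nonint_familyE n a b c alpha xs (F : n.-tuple (seq point)) :
  size xs = n -> (forall i, (i < n)%N -> alpha i = a + (nth 0%N xs i)%:Z) ->
  nonint_family a b c alpha F <-> nonint_paths a b c xs F.
Proof.
move=> sxs alphaE; split=> [[Fpath Fdisj]|[_ Fpath Fdisj]].
  split=> [|i|i j]; rewrite ?size_tuple ?sxs // => ilt.
    by have := Fpath (Ordinal ilt); rewrite (tnth_nth [::]) alphaE.
  by move=> jlt ij; have := Fdisj (Ordinal ilt) (Ordinal jlt) ij; rewrite !(tnth_nth [::]).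
rewrite sxs in Fpath Fdisj; split=> [i|i j ij]; rewrite !(tnth_nth [::]).
  by rewrite alphaE //; apply: Fpath.
exact: Fdisj.
Qed.

Lemma column_offsets n a (alpha : nat -> int) :
  a <= alpha 0%N -> (forall i, (i.+1 < n)%N -> alpha i <= alpha i.+1) ->
  exists xs, [/\ size xs = n, sorted leq xs &
                 forall i, (i < n)%N -> alpha i = a + (nth 0%N xs i)%:Z].
Proof.
move=> a_le alpha_le; exists [seq absz (alpha i - a) | i <- iota 0 n].
have alpha_ge i : (i < n)%N -> a <= alpha i.
  by elim: i => [//|i IH] ilt; have := alpha_le i ilt; have := IH (ltnW ilt); lia.
have alphaE i : (i < n)%N -> alpha i = a + (nth 0%N [seq absz (alpha i - a) | i <- iota 0 n] i)%:Z.
  by move=> ilt; rewrite (nth_map 0%N) ?size_iota // nth_iota // add0n; have := alpha_ge i ilt; lia.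
split=> //; first by rewrite size_map size_iota.
apply/(sortedP 0%N) => i; rewrite size_map size_iota => ilt.
by have := alpha_le i ilt; rewrite !alphaE //; lia.
Qed.

Theorem proposition8 (n : nat) (a b c : int) (alpha : nat -> int) :
  (0 < n)%N ->
  a <= alpha 0%N ->
  (forall i : nat, (i.+1 < n)%N -> alpha i <= alpha i.+1) ->
  b <= c ->
  exists S : seq (n.-tuple (seq point)),
    uniq S /\
    (forall F : n.-tuple (seq point), F \in S <-> nonint_family a b c alpha F) /\
    ((size S)%:R : rat) =
      (\prod_(i < n) \prod_(j < n | (i < j)%N) ((alpha j - alpha i)%:~R : rat)) *
      \prod_(i < n)
        (((absz (alpha i + c - a - b)%R)`!)%:R /
         (((absz (alpha i - a)%R)`!)%:R * ((absz (c - b + (i : nat)%:Z)%R)`!)%:R)).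
Proof.
move=> _ a_le alpha_le b_le; have [xs [sxs xs_sorted alphaE]] := column_offsets a_le alpha_le.
have cE : c = b + (absz (c - b))%:Z by lia.
have [S SE sizeS] := count_nonint_paths rat a cE sxs xs_sorted.
have size_family F : nonint_paths a b c xs F -> size F = n by case=> ->.
have [[S'_uniq memS'] sizeS'] := enumerates_tuples size_family SE.
exists (pmap insub S); split=> //; split=> [F|].
  by rewrite memS' (nonint_familyE b c F sxs alphaE).
rewrite sizeS' sizeS lgv_det_closed; congr (_ * _).
  apply: eq_bigr => i _; apply: eq_bigr => j _; rewrite !alphaE //.
  by rewrite (_ : _ - _ = (nth 0%N xs j)%:Z - (nth 0%N xs i)%:Z) ?intrB //; lia.
apply: eq_bigr => i _; rewrite alphaE //; congr (((_)`!)%:R / (((_)`!)%:R * ((_)`!)%:R)); lia.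
Qed.
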